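(* For all $n\ge 1$ and $0\le k\le \lfloor n/2\rfloor$, $$W(n+1,k)=2^{n-k}S(n,k).$$ Moreover, for $n\ge 1$, $$S_n(x)=\frac{1}{2^{n+1}x}\sum_{k=0}^{\lfloor n/2\rfloor+1}p(n+1,n-2k+2)\,(2x-1)^k,$$ where for positive integers $m$ and integers $k$ we set $$p(m,m-2k+1)=(-1)^{k}\sum_{i\ge 1} i!\,{m\brace i}\,(-2)^{m-i}\left[\binom{i}{m-2k}-\binom{i}{m-2k+1}\right],$$ with ${m\brace i}$ the Stirling numbers of the second kind.
   Context: For a permutation $\pi=\pi(1)\cdots\pi(n)$ of $[n]=\{1,\dots,n\}$, a descent is an index $i\in[n-1]$ with $\pi(i)>\pi(i+1)$, and ${\rm des}(\pi)$ is the number of descents. A double descent is an index $i\in[n-2]$ with $\pi(i)>\pi(i+1)>\pi(i+2)$. The permutation $\pi$ is simsun if for every $k\in[n]$, the subword of $\pi$ consisting of the letters in $[k]$ (in the order they appear in $\pi$) has no double descents. Let $\mathcal{RS}_n$ be the set of simsun permutations of $[n]$, $S(n,k)=\#\{\pi\in\mathcal{RS}_n:{\rm des}(\pi)=k\}$ and $S_n(x)=\sum_k S(n,k)x^k$. An interior peak of $\pi\in\mathfrak S_n$ is an index $i\in\{2,\dots,n-1\}$ with $\pi(i-1)<\pi(i)>\pi(i+1)$; $W(n,k)$ denotes the number of permutations in $\mathfrak S_n$ with exactly $k$ interior peaks. *)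

From HB Require Import structures.
From mathcomp Require Import all_boot all_order all_algebra all_fingroup.
Set Implicit Arguments. Unset Strict Implicit. Unset Printing Implicit Defensive.
Import Order.TTheory GRing.Theory Num.Theory.

(* A permutation pi of [n] is represented by s : 'S_n, i.e. a permutation of
   {0,...,n-1}; its one-line word is pi(1) ... pi(n) shifted down by 1
   (this does not affect any order comparison). *)
Definition word (n : nat) (s : 'S_n) : seq nat := [seq val (s i) | i <- enum 'I_n].

Definition des (w : seq nat) : nat :=
  count (fun i => nth 0 w i > nth 0 w i.+1) (iota 0 (size w).-1).

Definition has_ddes (w : seq nat) : bool :=
  has (fun i => (nth 0 w i > nth 0 w i.+1) && (nth 0 w i.+1 > nth 0 w i.+2))
      (iota 0 (size w - 2)).

(* simsun: for every k in [n], the subword of letters in [k] (values < k in the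
   0-based encoding) has no double descent *)
Definition simsun (w : seq nat) : bool :=
  all (fun k => ~~ has_ddes [seq a <- w | a < k]) (iota 1 (size w)).

(* interior peaks: positions 2..n-1 (1-based), i.e. 1..n-2 (0-based) *)
Definition ipeaks (w : seq nat) : nat :=
  count (fun i => (nth 0 w i.-1 < nth 0 w i) && (nth 0 w i > nth 0 w i.+1))
        (iota 1 (size w - 2)).

Definition Snk (n k : nat) : nat :=
  #|[set s : 'S_n | simsun (word s) && (des (word s) == k)]|.

Definition Wnk (n k : nat) : nat :=
  #|[set s : 'S_n | ipeaks (word s) == k]|.

(* S_n(x) = sum_k S(n,k) x^k  (descents are at most n-1, so k < n suffices) *)
Definition Spoly_eval (R : nzRingType) (n : nat) (x : R) : R :=
  (\sum_(k < n) (Snk n k)%:R * x ^+ k)%R.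

Fixpoint stirling2 (m i : nat) : nat :=
  match m, i with
  | 0, 0 => 1
  | 0, _.+1 => 0
  | _.+1, 0 => 0
  | m'.+1, i'.+1 => i'.+1 * stirling2 m' i'.+1 + stirling2 m' i'
  end.

Definition binz (i : nat) (j : int) : int :=
  match j with Posz j' => ('C(i, j'))%:Z | Negz _ => 0%R end.

(* pp m k := p(m, m - 2k + 1)
   = (-1)^k sum_{i>=1} i! S2(m,i) (-2)^(m-i) [C(i, m-2k) - C(i, m-2k+1)];
   terms with i > m vanish since S2(m,i) = 0. *)
Definition pp (m : nat) (k : int) : int :=
  ((-1) ^+ `|k|%N *
   \sum_(1 <= i < m.+1)
     ((i`! * stirling2 m i)%:Z * (-2) ^+ (m - i) *
      (binz i (m%:Z - 2 * k) - binz i (m%:Z - 2 * k + 1))))%R.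

From mathcomp Require Import all_boot all_order all_algebra all_fingroup.
From mathcomp Require Import zify ring.
Import Order.TTheory GRing.Theory Num.Theory.

(* Inserting the largest letter n into one of the n + 1 slots of a permutation
   word of [n] changes its statistics by at most one. A word with p interior
   peaks keeps p peaks for 2p + 2 slots and gains one for the remaining n - 1 - 2p.
   A simsun word with d descents stays simsun exactly when n is not put just
   before a descent top (that would create a double descent), and then keeps d
   descents for d + 1 slots and gains one for n - 2d. Hence
     W(n+1,k) = (2k+2) W(n,k) + (n+1-2k) W(n,k-1),
     S(n+1,k) = (k+1) S(n,k) + (n+2-2k) S(n,k-1),
   and 2^k W(n+1,k) = 2^n S(n,k) follows by induction.
   For the second identity, the recurrence of the Stirling numbers together
   with Pascal's rule and the absorption identity for binomial coefficients
   gives a three-term recurrence for p(m, m-2k+1), i.e. a differential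
   recurrence for P_m(x) = sum_k p(m, m-2k+1) x^k. The polynomial
   Q_m(x) = sum_k W(m,k) x^(k+1) satisfies the recurrence obtained by the shift
   x |-> x - 1, so Q_m(x) = P_m(x - 1); evaluating at 2x and using the first
   identity gives S_n(x). *)

Set Implicit Arguments.
Unset Strict Implicit.
Unset Printing Implicit Defensive.

(** * Permutations as words *)

Section InsertAt.
Variable T : Type.

Definition insert_at (j : nat) (a : T) (w : seq T) : seq T :=
  take j w ++ a :: drop j w.

Lemma size_insert_at j a w : size (insert_at j a w) = (size w).+1.
Proof. by rewrite /insert_at size_cat /= addnS -size_cat cat_take_drop. Qed.

Lemma nth_insert_at x0 j a w i : j <= size w ->
  nth x0 (insert_at j a w) i =
  if i < j then nth x0 w i else if i == j then a else nth x0 w i.-1.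
Proof.
move=> jw; rewrite /insert_at nth_cat size_takel //.
case: ltnP => [ij|ji]; first by rewrite nth_take.
case: eqVneq => [->|nji]; first by rewrite subnn.
have -> : i - j = (i - j).-1.+1 by lia.
by rewrite /= nth_drop; congr nth; lia.
Qed.

End InsertAt.

Section InsertAtEq.
Variable T : eqType.

Lemma mem_insert_at j (a : T) w x : (x \in insert_at j a w) = (x == a) || (x \in w).
Proof. by rewrite /insert_at mem_cat in_cons orbCA -mem_cat cat_take_drop. Qed.

Lemma uniq_insert_at j (a : T) w : a \notin w -> uniq w -> uniq (insert_at j a w).
Proof.
by move=> aw uw; rewrite /insert_at -cat1s uniq_catCA /= cat_take_drop aw.
Qed.

Lemma index_insert_at j (a : T) w : a \notin w -> j <= size w ->
  index a (insert_at j a w) = j.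
Proof.
move=> aw jw; rewrite /insert_at index_cat size_takel // /= eqxx addn0.
by rewrite (negbTE (contra (@mem_take _ _ _ _) aw)).
Qed.

Lemma filter_insert_at j (a : T) w : a \notin w ->
  [seq x <- insert_at j a w | x != a] = w.
Proof.
move=> aw; rewrite /insert_at filter_cat /= eqxx -filter_cat cat_take_drop.
by apply/all_filterP/allP => x xw; apply: contraNneq aw => <-.
Qed.

Lemma insert_at_inj j1 j2 (a : T) w1 w2 :
  a \notin w1 -> a \notin w2 -> j1 <= size w1 -> j2 <= size w2 ->
  insert_at j1 a w1 = insert_at j2 a w2 -> j1 = j2 /\ w1 = w2.
Proof.
move=> aw1 aw2 jw1 jw2 E; split.
  by rewrite -(index_insert_at aw1 jw1) E index_insert_at.
by rewrite -(filter_insert_at j1 aw1) E filter_insert_at.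
Qed.

End InsertAtEq.

Fixpoint perm_words (n : nat) : seq (seq nat) :=
  if n is m.+1 then [seq insert_at j m w | w <- perm_words m, j <- iota 0 m.+1]
  else [:: [::]].

Lemma perm_wordsS n :
  perm_words n.+1 = [seq insert_at j n w | w <- perm_words n, j <- iota 0 n.+1].
Proof. by []. Qed.

Definition is_perm_word (n : nat) (w : seq nat) : bool :=
  [&& size w == n, uniq w & all (fun a => a < n) w].

Lemma notin_perm_word n w : is_perm_word n w -> n \notin w.
Proof. by case/and3P=> _ _ /allP wn; apply/negP => /wn; rewrite ltnn. Qed.

Lemma perm_words_is_perm_word n w : w \in perm_words n -> is_perm_word n w.
Proof.
elim: n w => [|n IH] w; first by rewrite inE => /eqP->.
case/allpairsP => [[v j] [/= /IH vn _ ->]].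
have nv := notin_perm_word vn; case/and3P: vn => /eqP sv uv /allP vn.
rewrite /is_perm_word size_insert_at sv eqxx uniq_insert_at //=.
by apply/allP => x; rewrite mem_insert_at => /orP [/eqP -> //|/vn]; lia.
Qed.

Lemma uniq_perm_words n : uniq (perm_words n).
Proof.
elim: n => [|n IH] //; apply: allpairs_uniq => //; first exact: iota_uniq.
move=> [v1 j1] [v2 j2] /allpairsP [[v j] [vP jP [-> ->]]].
move=> /allpairsP [[v' j'] [vP' jP' [-> ->]]] E.
rewrite !mem_iota /= in jP jP'; rewrite /= in vP vP' E *.
have /perm_words_is_perm_word wv := vP; have /perm_words_is_perm_word wv' := vP'.
have [/eqP sv _ _] := and3P wv; have [/eqP sv' _ _] := and3P wv'.
have jv : j <= size v by rewrite sv; lia.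
have jv' : j' <= size v' by rewrite sv'; lia.
by case: (insert_at_inj (notin_perm_word wv) (notin_perm_word wv') jv jv' E) => -> ->.
Qed.

Lemma size_perm_words n : size (perm_words n) = n`!.
Proof. by elim: n => [|n IH] //; rewrite perm_wordsS size_allpairs IH size_iota factS mulnC. Qed.

Lemma word_inj n : injective (@word n).
Proof.
move=> s t E; apply/permP => i; apply: val_inj.
by have := (eq_in_map _ _ (enum 'I_n)).2 E i; rewrite mem_enum; apply.
Qed.

Lemma is_perm_word_word n w : is_perm_word n w -> exists s : 'S_n, word s = w.
Proof.
case/and3P => /eqP sw uw /allP wn.
have wi (i : 'I_n) : nth 0 w i < n by apply/wn/mem_nth; rewrite sw.
pose f (i : 'I_n) := Ordinal (wi i).
have f_inj : injective f.
  move=> i j /(congr1 val) /= /eqP; rewrite nth_uniq ?sw // => /eqP.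
  exact: val_inj.
exists (perm f_inj); rewrite /word (eq_map (g := fun i : 'I_n => nth 0 w i)).
  by rewrite (map_comp (nth 0 w) val) val_enum_ord -sw; apply: mkseq_nth.
by move=> i; rewrite permE.
Qed.

Lemma perm_eq_word_perm_words n : perm_eq [seq word s | s : 'S_n] (perm_words n).
Proof.
apply: uniq_perm; first by rewrite map_inj_uniq ?enum_uniq //; apply: word_inj.
  exact: uniq_perm_words.
have [||] := uniq_min_size (uniq_perm_words n) (s2 := [seq word s | s : 'S_n]).
- move=> w /perm_words_is_perm_word /is_perm_word_word [s <-].
  by apply: map_f; rewrite mem_enum.
- by rewrite size_map size_perm_words -cardE card_Sn.
by move=> _ E w; rewrite E.
Qed.

Lemma card_word_pred n (P : pred (seq nat)) :
  #|[set s : 'S_n | P (word s)]| = count P (perm_words n).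
Proof.
rewrite cardsE cardE /enum_mem size_filter -(count_map (@word n) P).
by rewrite -enumT; apply/seq.permP/perm_eq_word_perm_words.
Qed.

(** * Statistics after inserting a largest letter *)

Lemma count_iota_sum (f : pred nat) a m N : a + m <= N ->
  count f (iota a m) = \sum_(0 <= i < N) ((a <= i < a + m) && f i).
Proof.
move=> amN; have -> : iota a m = index_iota a (a + m) by rewrite /index_iota addKn.
rewrite -sumn_count sumnE big_map (big_nat_widen _ _ _ _ _ amN).
rewrite (big_nat_widenl _ _ _ _ _ (leq0n a)) big_mkcond /=.
by apply: eq_bigr => i _; rewrite andbC; case: (_ && _).
Qed.

Lemma sum_nat_eq1 (F : nat -> nat) j N : j < N ->
  \sum_(0 <= i < N) ((i == j) * F i) = F j.
Proof.
move=> jN; have := @big_nat1_eq _ 0 addn F j 0 N; rewrite jN big_mkcond /= => <-.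
by apply: eq_bigr => i _; case: (i == j); rewrite ?mul1n ?mul0n.
Qed.

Lemma count_iota0_sum (f : pred nat) N : count f (iota 0 N) = \sum_(0 <= i < N) f i.
Proof. by rewrite (@count_iota_sum _ _ _ N) //; apply: eq_big_nat => i /= ->. Qed.

Lemma sum_nat_eq1S (F : nat -> nat) j N : j <= N ->
  \sum_(0 <= i < N) ((i.+1 == j) * F i) = (0 < j) * F j.-1.
Proof.
case: j => [|j] jN; first by rewrite big1.
by rewrite mul1n -(@sum_nat_eq1 F j N).
Qed.

Definition peak_at (w : seq nat) (i : nat) : bool :=
  [&& 0 < i, i.+1 < size w, nth 0 w i.-1 < nth 0 w i & nth 0 w i.+1 < nth 0 w i].

Definition des_at (w : seq nat) (i : nat) : bool :=
  (i.+1 < size w) && (nth 0 w i.+1 < nth 0 w i).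

Definition ddes_at (w : seq nat) (i : nat) : bool := des_at w i && des_at w i.+1.

Lemma ipeaks_sum w N : size w <= N -> ipeaks w = \sum_(0 <= i < N) peak_at w i.
Proof.
case: (posnP N) => [-> /[!leqn0] /eqP /size0nil -> |N0 wN]; first by rewrite big_geq.
rewrite /ipeaks (@count_iota_sum _ _ _ N); last lia.
apply: eq_big_nat => i _; rewrite /peak_at.
by case: (nth 0 w i.-1 < nth 0 w i); case: (nth 0 w i.+1 < nth 0 w i); lia.
Qed.

Lemma des_sum w N : size w <= N -> des w = \sum_(0 <= i < N) des_at w i.
Proof.
move=> wN; rewrite /des (@count_iota_sum _ _ _ N); last lia.
by apply: eq_big_nat => i _; rewrite /des_at; case: (nth 0 w i.+1 < nth 0 w i); lia.
Qed.

Lemma has_ddesE w : has_ddes w = has (ddes_at w) (iota 0 (size w)).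
Proof.
rewrite /has_ddes; apply/hasP/hasP => -[i]; rewrite !mem_iota /ddes_at /des_at => iw.
  by move=> /andP [h1 h2]; exists i; rewrite ?mem_iota; lia.
by move=> h; exists i; rewrite ?mem_iota; lia.
Qed.

Lemma has_ddesPn w : reflect (forall i, ~~ ddes_at w i) (~~ has_ddes w).
Proof.
rewrite has_ddesE; apply: (iffP hasPn) => [nd i|nd i _]; last exact: nd.
have [iw|] := ltnP i (size w); first by apply: nd; rewrite mem_iota.
by rewrite /ddes_at /des_at; lia.
Qed.

Section InsertMax.
Variables (j a : nat) (w : seq nat).
Hypotheses (jw : j <= size w) (wa : all (fun x => x < a) w).

Let nth_lt i : i < size w -> nth 0 w i < a.
Proof. by move=> iw; apply: (allP wa); apply: mem_nth. Qed.

Lemma peak_at_insert_at i :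
  (peak_at (insert_at j a w) i : nat) =
  ((i.+1 < j) && peak_at w i) + ((i == j) && (0 < j < size w)) + ((j.+1 < i) && peak_at w i.-1).
Proof.
case: i => [|i]; first by rewrite /peak_at /=; lia.
have := @nth_lt i; have := @nth_lt i.+1.
by rewrite /peak_at size_insert_at !nth_insert_at //=; repeat case: ifP => ?; lia.
Qed.

Lemma des_at_insert_at i :
  (des_at (insert_at j a w) i : nat) =
  ((i.+1 < j) && des_at w i) + ((i == j) && (j < size w)) + ((j < i) && des_at w i.-1).
Proof.
have := @nth_lt i; have := @nth_lt i.+1; have := @nth_lt i.-1.
rewrite /des_at size_insert_at !nth_insert_at //.
by case: i => [|i] /=; repeat case: ifP => ?; lia.
Qed.

Lemma ddes_at_insert_at i : (forall i, ~~ ddes_at w i) ->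
  ddes_at (insert_at j a w) i = (i == j) && des_at w j.
Proof.
move=> nd; have := nd i; have := nd i.-1.
have := @nth_lt i; have := @nth_lt i.+1; have := @nth_lt i.-1; have := @nth_lt i.+2.
case: (eqVneq i j) => [->|ij].
  rewrite /ddes_at /des_at size_insert_at !nth_insert_at //.
  by case: j jw => [|j'] /=; repeat case: ifP => ?; lia.
rewrite /ddes_at /des_at size_insert_at !nth_insert_at //.
by case: i ij => [|i] /=; repeat case: ifP => ?; lia.
Qed.

Lemma ipeaks_insert_at :
  ipeaks (insert_at j a w) + peak_at w j.-1 + peak_at w j = ipeaks w + (0 < j < size w).
Proof.
set s := size w.
rewrite (@ipeaks_sum _ s.+2) ?size_insert_at // (@ipeaks_sum w s.+2); last lia.
under eq_big_nat => i _ do rewrite peak_at_insert_at.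
rewrite !big_split /=.
have new : \sum_(0 <= i < s.+2) ((i == j) && (0 < j < s) : nat) = (0 < j < s).
  rewrite -(@sum_nat_eq1 (fun=> (0 < j < s) : nat) j s.+2); last lia.
  by apply: eq_big_nat => i _; case: (i == j); rewrite ?mul1n ?mul0n.
have shift : \sum_(0 <= i < s.+2) ((j.+1 < i) && peak_at w i.-1 : nat) =
             \sum_(0 <= i < s.+2) ((j < i) && peak_at w i : nat).
  rewrite big_nat_recl // [RHS]big_nat_recr //=.
  have -> : peak_at w s.+1 = false by rewrite /peak_at; lia.
  by rewrite andbF addn0.
have split : \sum_(0 <= i < s.+2) (peak_at w i : nat) =
   \sum_(0 <= i < s.+2) ((i.+1 < j) && peak_at w i : nat) +
   \sum_(0 <= i < s.+2) ((i.+1 == j) * peak_at w i) +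
   \sum_(0 <= i < s.+2) ((i == j) * peak_at w i) +
   \sum_(0 <= i < s.+2) ((j < i) && peak_at w i : nat).
  rewrite -!big_split /=; apply: eq_big_nat => i _.
  by case: (peak_at w i); case: (i =P j); case: (i.+1 =P j); lia.
have -> : (peak_at w j.-1 : nat) = (0 < j) * peak_at w j.-1.
  by case: (j) => [|j']; rewrite ?mul0n ?mul1n.
rewrite new shift split !sum_nat_eq1 ?sum_nat_eq1S //; lia.
Qed.

Lemma des_insert_at :
  des (insert_at j a w) + ((0 < j) && des_at w j.-1) = des w + (j < size w).
Proof.
set s := size w.
rewrite (@des_sum _ s.+2) ?size_insert_at // (@des_sum w s.+2) //; last lia.
under eq_big_nat => i _ do rewrite des_at_insert_at.
rewrite !big_split /=.
have new : \sum_(0 <= i < s.+2) ((i == j) && (j < s) : nat) = (j < s).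
  rewrite -(@sum_nat_eq1 (fun=> (j < s) : nat) j s.+2); last lia.
  by apply: eq_big_nat => i _; case: (i == j); rewrite ?mul1n ?mul0n.
have shift : \sum_(0 <= i < s.+2) ((j < i) && des_at w i.-1 : nat) =
             \sum_(0 <= i < s.+2) ((j <= i) && des_at w i : nat).
  rewrite big_nat_recl // [RHS]big_nat_recr //=.
  have -> : des_at w s.+1 = false by rewrite /des_at; lia.
  by rewrite andbF addn0.
have split : \sum_(0 <= i < s.+2) (des_at w i : nat) =
   \sum_(0 <= i < s.+2) ((i.+1 < j) && des_at w i : nat) +
   \sum_(0 <= i < s.+2) ((i.+1 == j) * des_at w i) +
   \sum_(0 <= i < s.+2) ((j <= i) && des_at w i : nat).
  rewrite -!big_split /=; apply: eq_big_nat => i _.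
  by case: (des_at w i); case: (i.+1 =P j); lia.
have -> : ((0 < j) && des_at w j.-1 : nat) = (0 < j) * des_at w j.-1.
  by case: (j) => [|j']; rewrite ?mul0n ?mul1n.
rewrite new shift split sum_nat_eq1S //; lia.
Qed.

Lemma has_ddes_insert_at : ~~ has_ddes w -> has_ddes (insert_at j a w) = des_at w j.
Proof.
move=> /has_ddesPn nd; rewrite has_ddesE size_insert_at.
under eq_has => i do rewrite ddes_at_insert_at //.
apply/hasP/idP => [[i _ /andP [] //]|dj].
by exists j; rewrite ?eqxx // mem_iota; lia.
Qed.

Lemma simsun_insert_at : size w = a ->
  simsun (insert_at j a w) = simsun w && ~~ has_ddes (insert_at j a w).
Proof.
move=> sw; rewrite /simsun size_insert_at.
rewrite -[(size w).+1]addn1 iotaD all_cat /= andbT add1n.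
congr (_ && ~~ has_ddes _).
  apply: eq_in_all => k; rewrite mem_iota => kw.
  rewrite /insert_at filter_cat /= ifN -?filter_cat ?cat_take_drop //; lia.
apply/all_filterP/allP => x; rewrite mem_insert_at => /orP [/eqP ->|/(allP wa)]; lia.
Qed.

End InsertMax.

Lemma simsun_no_ddes w : all (fun x => x < size w) w -> simsun w -> ~~ has_ddes w.
Proof.
move=> /all_filterP ws; case: (posnP (size w)) => [/size0nil -> //|w0].
by move=> /allP /(_ (size w)); rewrite ws mem_iota; apply; lia.
Qed.

(* The subtraction never truncates, by [peak_at_adjacent]. *)
Definition peak_gain (w : seq nat) (j : nat) : nat :=
  (0 < j < size w) - (peak_at w j.-1 + peak_at w j).

Lemma peak_at_adjacent w j : peak_at w j.-1 + peak_at w j <= (0 < j < size w).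
Proof. by rewrite /peak_at; case: j => [|[|j]] /=; lia. Qed.

Lemma ipeaks_insert_at_gain j a w : j <= size w -> all (fun x => x < a) w ->
  ipeaks (insert_at j a w) = ipeaks w + peak_gain w j.
Proof.
move=> jw wa; have := ipeaks_insert_at jw wa; have := peak_at_adjacent w j.
by rewrite /peak_gain; lia.
Qed.

Lemma sum_peak_gain w : 0 < size w ->
  \sum_(0 <= j < (size w).+1) peak_gain w j + (ipeaks w).*2 = (size w).-1.
Proof.
move=> w0; set s := size w.
have lost : \sum_(0 <= j < s.+1) (peak_at w j.-1 + peak_at w j) = (ipeaks w).*2.
  rewrite big_split /= big_nat_recl //= -(@ipeaks_sum w s) // -(@ipeaks_sum w s.+1) //.
  by rewrite /peak_at /= addnn.
have interior : \sum_(0 <= j < s.+1) (0 < j < s : nat) = s.-1.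
  rewrite -[RHS](size_iota 1) -count_predT (@count_iota_sum _ _ _ s.+1); last lia.
  by apply: eq_big_nat => j _ /=; lia.
rewrite -lost -interior -big_split /=; apply: eq_big_nat => j _.
by have := peak_at_adjacent w j; rewrite /peak_gain; lia.
Qed.

Lemma ipeaks_lt w : 0 < size w -> (ipeaks w).*2 < size w.
Proof. by move=> w0; have := sum_peak_gain w0; lia. Qed.

Lemma count_ipeaks_insert_at k a w : 0 < size w -> all (fun x => x < a) w ->
  count (fun j => ipeaks (insert_at j a w) == k) (iota 0 (size w).+1) =
  (ipeaks w == k) * (2 * k + 2) + (ipeaks w + 1 == k) * ((size w).+1 - 2 * k).
Proof.
move=> w0 wa; have gain1 j : peak_gain w j <= 1 by rewrite /peak_gain; lia.
rewrite count_iota0_sum (eq_big_nat _ _ (F2 := fun j =>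
  (ipeaks w == k) * (1 - peak_gain w j) + (ipeaks w + 1 == k) * peak_gain w j)).
  rewrite big_split /= -!big_distrr /=.
  have total : \sum_(0 <= j < (size w).+1) (1 - peak_gain w j) +
               \sum_(0 <= j < (size w).+1) peak_gain w j = (size w).+1.
    rewrite -big_split /= -[RHS](subn0 (size w).+1) -[RHS]muln1 -sum_nat_const_nat.
    by apply: eq_big_nat => j _; have := gain1 j; lia.
  have := sum_peak_gain w0.
  by case: (ipeaks w =P k); case: (ipeaks w + 1 =P k); lia.
move=> j js; rewrite ipeaks_insert_at_gain //; have := gain1 j.
by case: (ipeaks w =P k); case: (ipeaks w + 1 =P k); case: (ipeaks w + _ =P k); lia.
Qed.

Definition des_gain (w : seq nat) (j : nat) : nat :=
  (j < size w) - ((0 < j) && des_at w j.-1).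

Lemma des_insert_at_gain j a w : j <= size w -> all (fun x => x < a) w ->
  des (insert_at j a w) = des w + des_gain w j.
Proof.
move=> jw wa; have := des_insert_at jw wa.
by rewrite /des_gain /des_at; case: j {jw} => [|j] /=; lia.
Qed.

Lemma sum_des_gain w : \sum_(0 <= j < (size w).+1) des_gain w j + des w = size w.
Proof.
have lost : \sum_(0 <= j < (size w).+1) ((0 < j) && des_at w j.-1 : nat) = des w.
  by rewrite big_nat_recl //= -(@des_sum w (size w)).
have below : \sum_(0 <= j < (size w).+1) (j < size w : nat) = size w.
  rewrite -[RHS](size_iota 0) -[in RHS]count_predT (@count_iota_sum _ _ _ (size w).+1) //.
  by apply: eq_big_nat => j _ /=; lia.
rewrite -lost -[RHS]below -big_split /=; apply: eq_big_nat => j _.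
by rewrite /des_gain /des_at; case: j => [|j] /=; lia.
Qed.

Lemma des_gain_des_at w j : ~~ has_ddes w -> des_at w j -> des_gain w j = 1.
Proof.
move=> /has_ddesPn /(_ j.-1); rewrite /ddes_at /des_gain /des_at.
by case: j => [|j] /=; lia.
Qed.

Lemma count_simsun_insert_at k w : all (fun x => x < size w) w ->
  count (fun j => simsun (insert_at j (size w) w) && (des (insert_at j (size w) w) == k))
        (iota 0 (size w).+1) =
  simsun w * ((des w == k) * (k + 1) + (des w + 1 == k) * ((size w).+2 - 2 * k)).
Proof.
move=> ws; rewrite count_iota0_sum; have [sw|] := boolP (simsun w); last first.
  move=> /negbTE sw; rewrite mul0n big_nat_cond big1 // => j /andP [js _].
  by rewrite simsun_insert_at ?sw //; lia.
have nd := simsun_no_ddes ws sw.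
have gain1 j : des_gain w j <= 1 by rewrite /des_gain; lia.
rewrite (eq_big_nat _ _ (F2 := fun j =>
  (des w == k) * (~~ des_at w j * (1 - des_gain w j)) +
  (des w + 1 == k) * (~~ des_at w j * des_gain w j))).
  rewrite mul1n big_split /= -!big_distrr /=.
  have kept : \sum_(0 <= j < (size w).+1) (~~ des_at w j * des_gain w j) + des w =
              \sum_(0 <= j < (size w).+1) des_gain w j.
    rewrite (@des_sum w (size w).+1) // -big_split /=; apply: eq_big_nat => j _.
    by have [/(des_gain_des_at nd) ->|_] := boolP (des_at w j); lia.
  have total : \sum_(0 <= j < (size w).+1) (~~ des_at w j * (1 - des_gain w j)) +
               \sum_(0 <= j < (size w).+1) des_gain w j = (size w).+1.
    rewrite -big_split /= -[RHS](subn0 (size w).+1) -[RHS]muln1 -sum_nat_const_nat.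
    apply: eq_big_nat => j _; have := gain1 j.
    by have [/(des_gain_des_at nd) ->|_] := boolP (des_at w j); lia.
  have := sum_des_gain w.
  by case: (des w =P k); case: (des w + 1 =P k); lia.
move=> j js; rewrite simsun_insert_at // sw has_ddes_insert_at // des_insert_at_gain //.
have := gain1 j; have [/(des_gain_des_at nd) ->|_] := boolP (des_at w j).
  by case: (des w =P k); case: (des w + 1 =P k); lia.
by case: (des w =P k); case: (des w + 1 =P k); case: (des w + _ =P k); lia.
Qed.

(** * Recurrences for W(n,k) and S(n,k) *)

Lemma sum_count (T : Type) (P : pred T) s : \sum_(x <- s) (P x : nat) = count P s.
Proof. by rewrite -sumn_count sumnE big_map. Qed.

Lemma count_perm_wordsS (P : pred (seq nat)) n :
  count P (perm_words n.+1) =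
  \sum_(w <- perm_words n) count (fun j => P (insert_at j n w)) (iota 0 n.+1).
Proof. by rewrite perm_wordsS count_flatten sumnE !big_map; under eq_bigr do rewrite count_map. Qed.

Lemma WnkE n k : Wnk n k = count (fun w => ipeaks w == k) (perm_words n).
Proof. exact: (card_word_pred _ (fun w => ipeaks w == k)). Qed.

Lemma SnkE n k : Snk n k = count (fun w => simsun w && (des w == k)) (perm_words n).
Proof. exact: (card_word_pred _ (fun w => simsun w && (des w == k))). Qed.

Lemma Wnk_rec n k : 0 < n ->
  Wnk n.+1 k =
  (2 * k + 2) * Wnk n k + (n.+1 - 2 * k) * (if k is k'.+1 then Wnk n k' else 0).
Proof.
move=> n0; rewrite !WnkE count_perm_wordsS.
rewrite (eq_big_seq (fun w => (2 * k + 2) * (ipeaks w == k) +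
                              (n.+1 - 2 * k) * (ipeaks w + 1 == k))); last first.
  move=> w /perm_words_is_perm_word /and3P [/eqP sw _ wn].
  by rewrite -{1 2}sw count_ipeaks_insert_at ?sw // [_ * (2 * k + 2)]mulnC [_ * (n.+1 - _)]mulnC.
rewrite big_split /= -!big_distrr /= !sum_count; congr (_ + _ * _).
case: k => [|k]; first by rewrite (eq_count (a2 := pred0)) ?count_pred0 // => w; rewrite addn1.
by rewrite WnkE; apply: eq_count => w; rewrite addn1 eqSS.
Qed.

Lemma Snk_rec n k :
  Snk n.+1 k =
  (k + 1) * Snk n k + (n.+2 - 2 * k) * (if k is k'.+1 then Snk n k' else 0).
Proof.
rewrite !SnkE count_perm_wordsS.
rewrite (eq_big_seq (fun w => (k + 1) * (simsun w && (des w == k)) +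
                              (n.+2 - 2 * k) * (simsun w && (des w + 1 == k)))); last first.
  move=> w /perm_words_is_perm_word /and3P [/eqP sw _ wn].
  rewrite -{1 2 3}sw count_simsun_insert_at ?sw //.
  by case: (simsun w); rewrite ?mul0n ?mul1n ?muln0 // [_ * (k + 1)]mulnC [_ * (n.+2 - _)]mulnC.
rewrite big_split /= -!big_distrr /= !sum_count; congr (_ + _ * _).
case: k => [|k].
  by rewrite (eq_count (a2 := pred0)) ?count_pred0 // => w; rewrite addn1 andbF.
by rewrite SnkE; apply: eq_count => w; rewrite addn1 eqSS.
Qed.

Lemma Wnk_Snk_scaled n k : 2 ^ k * Wnk n.+1 k = 2 ^ n * Snk n k.
Proof.
elim: n k => [|n IH] k; first by rewrite WnkE SnkE; case: k => [|k]; rewrite /= ?muln0.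
rewrite Wnk_rec // Snk_rec; case: k => [|k].
  by have := IH 0; rewrite !expn0 expnS; lia.
have := IH k.+1; have := IH k; rewrite !expnS; nia.
Qed.

Lemma Wnk_Snk n k : k <= n -> Wnk n.+1 k = 2 ^ (n - k) * Snk n k.
Proof.
move=> kn; apply/eqP; rewrite -(@eqn_pmul2l (2 ^ k)) ?expn_gt0 //.
by rewrite Wnk_Snk_scaled mulnA -expnD subnKC.
Qed.

Lemma Wnk_eq0 m k : 0 < m -> m <= k.*2 -> Wnk m k = 0.
Proof.
move=> m0 mk; rewrite WnkE (eq_in_count (a2 := pred0)) ?count_pred0 // => w.
move=> /perm_words_is_perm_word /and3P [/eqP sw _ _] /=.
have := @ipeaks_lt w; rewrite sw; case: eqP; lia.
Qed.

(** * The numbers p(m, m-2k+1) and their generating polynomial *)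

Local Open Scope ring_scope.

Lemma stirling2_small m i : (m < i)%N -> stirling2 m i = 0%N.
Proof. by elim: m i => [|m IH] [|i] //= mi; rewrite !IH //; lia. Qed.

Lemma binz_neg i z : z < 0 -> binz i z = 0.
Proof. by case: z. Qed.

Lemma binzS i z : binz i.+1 z = binz i z + binz i (z - 1).
Proof.
case: z => [[|j]|j].
- by rewrite /= !bin0.
- have -> : Posz j.+1 - 1 = Posz j by lia.
  by rewrite /= binS PoszD addrC.
- by have -> : Negz j - 1 = Negz j.+1 by rewrite !NegzE; lia.
Qed.

Lemma mul_binz i z : i%:Z * binz i z = z * binz i z + (z + 1) * binz i (z + 1).
Proof.
case: z => [j|[|j]].
- have -> : Posz j + 1 = Posz j.+1 by rewrite -addn1 PoszD.
  rewrite /= -!PoszM -PoszD; congr Posz; have := mul_bin_left i j.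
  by case: (leqP j i) => ji; [nia | rewrite !bin_small //; lia].
- by rewrite /= !mulr0 mul0r addr0.
- have -> : Negz j.+1 + 1 = Negz j by rewrite !NegzE; lia.
  by rewrite /= !mulr0 addr0.
Qed.

Definition pp_weight (m i : nat) : int := (i`! * stirling2 m i)%:Z * (-2) ^+ (m - i).

Lemma pp_weight_small m i : (m < i)%N -> pp_weight m i = 0.
Proof. by move=> mi; rewrite /pp_weight stirling2_small // muln0 mul0r. Qed.

Lemma pp_weightS m i : pp_weight m.+1 i = i%:Z * (- 2 * pp_weight m i + pp_weight m i.-1).
Proof.
rewrite /pp_weight; case: i => [|i]; first by rewrite /= !muln0 !mul0r.
rewrite factS /= subSS; case: (leqP i.+1 m) => im.
  have -> : (m - i = (m - i.+1).+1)%N by lia.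
  by rewrite exprS !PoszM !PoszD !PoszM; ring.
by rewrite (stirling2_small im) !PoszM !PoszD !PoszM; ring.
Qed.

Definition pp_sum (m : nat) (z : int) : int := \sum_(0 <= i < m.+1) pp_weight m i * binz i z.

Lemma pp_sumS m z :
  pp_sum m.+1 z = pp_sum m z - (z + 1) * pp_sum m (z + 1) + z * pp_sum m (z - 1).
Proof.
rewrite /pp_sum; under eq_big_nat => i _ do rewrite pp_weightS.
have -> : \sum_(0 <= i < m.+2) i%:Z * (-2 * pp_weight m i + pp_weight m i.-1) * binz i z =
  \sum_(0 <= i < m.+2) (- 2) * (pp_weight m i * (i%:Z * binz i z)) +
  \sum_(0 <= i < m.+2) pp_weight m i.-1 * (i%:Z * binz i z).
  by rewrite -big_split /=; apply: congr_big => // i _; ring.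
rewrite (big_nat_recr m.+1 0 (fun i => -2 * (pp_weight m i * (i%:Z * binz i z)))) //=.
rewrite pp_weight_small // mul0r mulr0 addr0.
rewrite (big_nat_recl m.+1 0 (fun i => pp_weight m i.-1 * (i%:Z * binz i z))) //=.
rewrite mul0r mulr0 add0r.
rewrite !mulr_sumr -sumrN -!big_split /=; apply: eq_bigr => i _.
rewrite mul_binz (mul_binz i.+1) !binzS.
have -> : z + 1 - 1 = z by ring.
by ring.
Qed.

Lemma pp_sum_small m j : (m < j)%N -> pp_sum m (Posz j) = 0.
Proof.
move=> mj; rewrite /pp_sum big_nat_cond big1 // => i /andP [/andP [_ im] _].
by rewrite /= bin_small ?mulr0 //; lia.
Qed.

Definition pp_diff (m : nat) (z : int) : int := pp_sum m (z - 1) - pp_sum m z.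

Lemma pp_diffS m z :
  pp_diff m.+1 z = (z - 1) * pp_diff m (z - 1) - (z + 1) * pp_diff m (z + 1).
Proof.
rewrite /pp_diff !pp_sumS.
have -> : z - 1 + 1 = z by ring.
have -> : z + 1 - 1 = z by ring.
by ring.
Qed.

Lemma ppE m k : (0 < m)%N -> pp m k%:Z = (-1) ^+ k * pp_diff m (m%:Z - 2 * k%:Z + 1).
Proof.
case: m => [|m] // _; rewrite /pp /pp_diff /pp_sum; congr (_ * _).
have -> : m.+1%:Z - 2 * k%:Z + 1 - 1 = m.+1%:Z - 2 * k%:Z by ring.
rewrite -sumrB [RHS]big_nat_recl // pp_weightS !mul0r add0r big_add1 /=.
by apply: eq_bigr => i _; rewrite /pp_weight mulrBr.
Qed.

Lemma pp_diffE m k : (0 < m)%N ->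
  pp_diff m (m%:Z - 2 * k%:Z + 1) = (-1) ^+ k * pp m k%:Z.
Proof. by move=> m0; rewrite ppE // mulrA -exprMn mulrNN mulr1 expr1n mul1r. Qed.

Lemma ppS0 m : (0 < m)%N -> pp m.+1 0%:Z = m.+1%:Z * pp m 0%:Z.
Proof.
move=> m0; rewrite (ppE 0%N) // pp_diffS.
have -> : m.+1%:Z - 2 * 0%:Z + 1 - 1 = m%:Z - 2 * 0%:Z + 1 by lia.
have -> : m.+1%:Z - 2 * 0%:Z + 1 + 1 = Posz m.+3 by lia.
rewrite pp_diffE // /pp_diff; have -> : Posz m.+3 - 1 = Posz m.+2 by lia.
have -> : m%:Z - 2 * 0%:Z + 1 = m.+1%:Z by lia.
by rewrite !pp_sum_small; [ring|lia..].
Qed.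

Lemma ppSS m k : (0 < m)%N ->
  pp m.+1 k.+1 = (m%:Z - 1 - 2 * k%:Z) * pp m k.+1 + (m%:Z + 1 - 2 * k%:Z) * pp m k.
Proof.
move=> m0; rewrite (ppE k.+1) // pp_diffS.
have -> : m.+1%:Z - 2 * k.+1%:Z + 1 - 1 = m%:Z - 2 * k.+1%:Z + 1 by lia.
have -> : m.+1%:Z - 2 * k.+1%:Z + 1 + 1 = m%:Z - 2 * k%:Z + 1 by lia.
have sign : (-1) ^+ k * (-1) ^+ k = 1 :> int by rewrite -exprMn mulrNN mulr1 expr1n.
rewrite !pp_diffE // !exprS; have -> : k.+1%:Z = k%:Z + 1 by lia.
transitivity ((-1) ^+ k * (-1) ^+ k *
  ((m%:Z - 1 - 2 * k%:Z) * pp m (k%:Z + 1) + (m%:Z + 1 - 2 * k%:Z) * pp m k)); first by ring.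
by rewrite sign mul1r.
Qed.

Lemma pp_eq0 m k : (m.+2 <= 2 * k)%N -> pp m k%:Z = 0.
Proof.
move=> mk; rewrite /pp big1 ?mulr0 // => i _.
by rewrite !binz_neg ?subrr ?mulr0 //; lia.
Qed.

Section Polynomials.
Variable R : comNzRingType.

Definition pp_poly (m : nat) : {poly R} := \poly_(k < m.+1) (pp m k%:Z)%:~R.

Definition peak_poly (m : nat) : {poly R} :=
  \poly_(k < m.+1) (if k is j.+1 then (Wnk m j)%:R else 0).

Lemma coef_pp_poly m k : (pp_poly m)`_k = (pp m k%:Z)%:~R.
Proof. by rewrite coef_poly; case: ltnP => // mk; rewrite pp_eq0 //; lia. Qed.

Lemma coef_peak_poly m k : (0 < m)%N ->
  (peak_poly m)`_k = if k is j.+1 then (Wnk m j)%:R else 0.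
Proof.
move=> m0; rewrite coef_poly; case: ltnP => // mk.
by case: k mk => [|j] // mj; rewrite Wnk_eq0 //; lia.
Qed.

Lemma pp_polyS m : (0 < m)%N ->
  pp_poly m.+1 = m.+1%:R *: (pp_poly m + 'X * pp_poly m) -
                 2%:R *: ('X * (pp_poly m)^`() + 'X * ('X * (pp_poly m)^`())).
Proof.
move=> m0; apply/polyP => i.
rewrite coef_pp_poly !(coefD, coefB, coefN, coefZ, coefXM, coef_deriv) !coef_pp_poly.
case: i => [|[|i]] /=; first by rewrite ppS0 //; ring.
  by rewrite (ppSS 0) //; ring.
by rewrite (ppSS i.+1) //; ring.
Qed.

Lemma peak_polyS m : (0 < m)%N ->
  peak_poly m.+1 = 2%:R *: ('X * (peak_poly m)^`() - 'X * ('X * (peak_poly m)^`())) +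
                   m.+1%:R *: ('X * peak_poly m).
Proof.
move=> m0; apply/polyP => i.
rewrite coef_peak_poly // !(coefD, coefB, coefN, coefZ, coefXM, coef_deriv) !coef_peak_poly //.
case: i => [|[|i]] /=; first by ring.
  by rewrite Wnk_rec //; ring.
rewrite Wnk_rec //; case: (leqP m i.*2) => mi; first by rewrite (Wnk_eq0 m0 mi); ring.
by rewrite natrD !natrM natrB; [ring | lia].
Qed.

Lemma pp_poly1 : pp_poly 1 = 1 + 'X.
Proof.
apply/polyP => i; rewrite coef_pp_poly coefD coef1 coefX.
have pp10 : pp 1 0%:Z = 1 by rewrite /pp big_nat1.
have pp11 : pp 1 1%:Z = 1 by rewrite /pp big_nat1.
case: i => [|[|i]]; [by rewrite pp10 addr0 | by rewrite pp11 add0r |].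
by rewrite pp_eq0 ?addr0 //; lia.
Qed.

Lemma peak_poly1 : peak_poly 1 = 'X.
Proof.
apply/polyP => i; rewrite coef_peak_poly // coefX; case: i => [|[|i]] //=.
  by rewrite WnkE.
by rewrite Wnk_eq0.
Qed.

Lemma peak_poly_comp m : (0 < m)%N -> peak_poly m = pp_poly m \Po ('X - 1).
Proof.
elim: m => [|m IH] // _; have [->|m0] := posnP m.
  by rewrite peak_poly1 pp_poly1 comp_polyD comp_polyX -polyC1 comp_polyC polyC1 addrC subrK.
have dX : ('X - 1 : {poly R})^`() = 1 by rewrite derivB derivX -polyC1 derivC subr0.
rewrite peak_polyS // IH // pp_polyS // deriv_comp dX mulr1.
rewrite !(comp_polyB, comp_polyD, comp_polyZ, comp_polyM, comp_polyX) -!mul_polyC.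
by ring.
Qed.

Lemma horner_pp_poly n y :
  (pp_poly n.+1).[y] = \sum_(k < n./2 + 2) (pp n.+1 k%:Z)%:~R * y ^+ k.
Proof.
rewrite /pp_poly horner_poly [RHS](big_ord_widen n.+2 (fun k => (pp n.+1 k%:Z)%:~R * y ^+ k)).
  rewrite [RHS]big_mkcond /=; apply: eq_bigr => k _; case: ltnP => // nk.
  by rewrite pp_eq0 ?mul0r //; lia.
lia.
Qed.

Lemma horner_peak_poly n t : (0 < n)%N ->
  (peak_poly n.+1).[t] = t * \sum_(j < n) (Wnk n.+1 j)%:R * t ^+ j.
Proof.
move=> n0; rewrite /peak_poly horner_poly big_ord_recl mul0r add0r big_ord_recr /=.
rewrite Wnk_eq0 // ?mul0r ?addr0 ?mulr_sumr; last lia.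
by apply: eq_bigr => j _; rewrite exprS mulrCA.
Qed.

Lemma Spoly_eval_Wnk n (x : R) :
  2 ^+ n * Spoly_eval n x = \sum_(j < n) (Wnk n.+1 j)%:R * (2 * x) ^+ j.
Proof.
rewrite /Spoly_eval mulr_sumr; apply: eq_bigr => j _.
have := congr1 (GRing.natmul (1 : R)) (Wnk_Snk_scaled n j).
rewrite !natrM !natrX exprMn => scaled.
by rewrite mulrA -scaled mulrA [_ * 2 ^+ j]mulrC.
Qed.

End Polynomials.

Lemma Spoly_eval_pp (R : numFieldType) n (x : R) : (0 < n)%N -> x != 0 ->
  Spoly_eval n x =
  (2 ^+ n.+1 * x)^-1 * \sum_(k < n./2 + 2) (pp n.+1 k%:Z)%:~R * (2 * x - 1) ^+ k.
Proof.
move=> n0 x0; have two0 : (2 : R) != 0 by rewrite pnatr_eq0.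
have -> : 2 * x - 1 = ('X - 1 : {poly R}).[2 * x] by rewrite !hornerE.
rewrite -horner_pp_poly -horner_comp -peak_poly_comp // horner_peak_poly //.
rewrite -Spoly_eval_Wnk exprS.
by field; rewrite x0 expf_neq0.
Qed.

Theorem proposition1 :
  forall n : nat, (1 <= n)%N ->
    (forall k : nat, (k <= n./2)%N -> Wnk n.+1 k = (2 ^ (n - k) * Snk n k)%N)
    /\
    (forall (R : numFieldType) (x : R), (x != 0)%R ->
       Spoly_eval n x =
       ((2 ^+ n.+1 * x)^-1 *
        \sum_(k < n./2 + 2) (pp n.+1 (k%:Z))%:~R * (2 * x - 1) ^+ k)%R).
Proof.
move=> n n1; split; first by move=> k kn; apply: Wnk_Snk; lia.
by move=> R x x0; apply: Spoly_eval_pp.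
Qed.
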